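(* Let $\lambda_b>0$, $\alpha>2$, $P>0$, $N>0$, $M\ge 1$ and $\mu\in[1,2]$. Let $(X_{11},X_{21})$ have joint probability density $(2\pi\lambda_b)^2x_{11}x_{21}e^{-\pi\lambda_b x_{21}^2}$ for $0<x_{11}<x_{21}$ and $0$ otherwise, and let $\mathbb{A}_{UE}=\{X_{11}\le M^{\frac{1}{\alpha\mu}}(N/P)^{\frac{2-\mu}{\alpha\mu}}X_{21}^{2/\mu}\}$. Then the probability density function of $X_{11}$ conditioned on $\mathbb{A}_{UE}$ is, for $x_{11}>0$, $$f_{X_{11}}(x_{11}\mid\mathbb{A}_{UE})=\frac{2\pi\lambda_b\,x_{11}\,\exp\!\Big(-\pi\lambda_b\max^2\Big(x_{11},\,x_{11}^{\mu/2}\big(\tfrac{P}{N}\big)^{\frac{2-\mu}{2\alpha}}\big(\tfrac{1}{M}\big)^{\frac{1}{2\alpha}}\Big)\Big)}{\mathbb{P}[\mathbb{A}_{UE}]},$$ where $\max^2(a,b)=(\max(a,b))^2$ and $\mathbb{P}[\mathbb{A}_{UE}]=\int_0^\infty 2(\pi\lambda_b)^2x_{21}e^{-\pi\lambda_b x_{21}^2}\min^2\big(x_{21},M^{\frac{1}{\alpha\mu}}(N/P)^{\frac{2-\mu}{\alpha\mu}}x_{21}^{2/\mu}\big)\,\mathrm{d}x_{21}$.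
   Context: This models a downlink cellular network (base stations of density $\lambda_b$, transmit power $P$, noise power $N$, path-loss exponent $\alpha$) with a scheduling rule based on the ''treating interference as noise'' condition with design parameters $M,\mu$: $X_{11}$ is the serving distance of the typical user, $X_{21}$ its distance to the most interfering base station, and $\mathbb{A}_{UE}$ the event that the typical user is scheduled. The joint density is the model assumed by the paper. *)

From HB Require Import structures.
From mathcomp Require Import all_boot all_order all_algebra.
From mathcomp Require Import all_classical all_reals all_analysis.
Set Implicit Arguments. Unset Strict Implicit. Unset Printing Implicit Defensive.
Import Order.TTheory GRing.Theory Num.Theory.
Import numFieldNormedType.Exports.
Local Open Scope classical_set_scope.
Local Open Scope ring_scope.

Section defs.
Variable R : realType.

Definition joint_dens (lb : R) (z : R * R) : R :=
  if (0 < z.1) && (z.1 < z.2) then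
    (2 * pi * lb) ^+ 2 * z.1 * z.2 * expR (- (pi * lb * z.2 ^+ 2))
  else 0.

Definition thr (al Pw N M mu : R) : R :=
  M `^ (1 / (al * mu)) * (N / Pw) `^ ((2 - mu) / (al * mu)).

Definition A_UE (al Pw N M mu : R) : set (R * R) :=
  [set z | z.1 <= thr al Pw N M mu * z.2 `^ (2 / mu)].

Definition pA_integrand (lb al Pw N M mu : R) (y : R) : R :=
  2 * (pi * lb) ^+ 2 * y * expR (- (pi * lb * y ^+ 2)) *
  (Num.min y (thr al Pw N M mu * y `^ (2 / mu))) ^+ 2.

Definition pA_formula (lb al Pw N M mu : R) : \bar R :=
  (\int[lebesgue_measure]_(y in `]0%R, +oo[) (pA_integrand lb al Pw N M mu y)%:E)%E.

Definition f_cond (lb al Pw N M mu : R) (x : R) : R :=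
  2 * pi * lb * x *
  expR (- (pi * lb * (Num.max x (x `^ (mu / 2) * (Pw / N) `^ ((2 - mu) / (2 * al))
                                    * (1 / M) `^ (1 / (2 * al)))) ^+ 2))
  / fine (pA_formula lb al Pw N M mu).

Definition condprob d (T : measurableType d) (P : probability T R)
  (E A : set T) : R := fine (P (E `&` A)) / fine (P A).

End defs.

From HB Require Import structures.
From mathcomp Require Import all_boot all_order all_algebra.
From mathcomp Require Import all_classical all_reals all_analysis.
From mathcomp Require Import measurable_realfun ring lra.
Set Implicit Arguments. Unset Strict Implicit. Unset Printing Implicit Defensive.
Import Order.TTheory GRing.Theory Num.Theory.
Import numFieldNormedType.Exports.
Local Open Scope classical_set_scope.
Local Open Scope ring_scope.

(* By Fubini-Tonelli both claims reduce to one-dimensional integrals of the joint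
   density over the sections of A_UE.  For 0 < x11 < x21, taking logarithms shows
   that x11 <= thr x21^(2/mu) is equivalent to cutoff x11 <= x21, where cutoff is
   the power function appearing in the max of the claimed density.  Hence, up to
   an endpoint, the x11-section over x21 is ]0, min(x21, thr x21^(2/mu))], on which
   the density is linear in x11, and the x21-section over x11 is
   [max(x11, cutoff x11), +oo[, on which it is c x21 exp(-pi lb x21^2), with
   antiderivative -c exp(-pi lb x21^2) / (2 pi lb). *)
Section integrals.
Variable R : realType.
Local Notation lebesgue := (@lebesgue_measure R).

Lemma is_derive_expR_Nsqr (c y : R) :
  is_derive y 1 (fun y => expR (- (c * y ^+ 2)))
    (expR (- (c * y ^+ 2)) * - (c * (2 * y))).
Proof.
have dN : is_derive y 1 (fun y : R => - (c * y ^+ 2)) (- (c * (2 * y))).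
  by apply: is_derive_eq; rewrite /GRing.scale/= !mulr1 -mulr2n mulr_natl.
exact: is_derive1_comp.
Qed.

Lemma integral_itv_linear (K a : R) (b0 b1 : bool) : 0 < a ->
  (\int[lebesgue]_(x in [set` Interval (BSide b0 0%R) (BSide b1 a)]) (K * x)%:E
   = (K * a ^+ 2 / 2)%:E)%E.
Proof.
move=> a0; have mK : measurable_fun [set: R] (fun x : R => (K * x)%:E).
  exact/measurable_EFinP/measurable_funM.
rewrite integral_itv_bndoo; last exact: measurable_funS mK.
rewrite -(integral_itv_bndoo true false); last exact: measurable_funS mK.
pose F x := K / 2 * x ^+ 2.
have dF (x : R) : is_derive x (1 : R) F (K * x).
  by apply: is_derive_eq; rewrite /GRing.scale/= !mulr1; field.
have cF : continuous F.
  by move=> x; apply: differentiable_continuous; apply/derivable1_diffP.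
rewrite (continuous_FTC2 a0 (F := F)).
- by rewrite /F expr0n /= mulr0 sube0; congr (_%:E); field.
- apply: continuous_subspaceT => x.
  by apply: continuousM; [exact: cst_continuous|exact: cvg_id].
- split; [by [] | exact: cvg_at_right_filter (cF 0) | exact: cvg_at_left_filter (cF a)].
- by move=> x _; rewrite derive1E derive_val.
Qed.

Lemma integral_rayleigh_tail (K c m : R) (b : bool) : 0 <= K -> 0 < c -> 0 <= m ->
  (\int[lebesgue]_(y in [set` Interval (BSide b m) +oo%O])
      (K * y * expR (- (c * y ^+ 2)))%:E
   = (K / (2 * c) * expR (- (c * m ^+ 2)))%:E)%E.
Proof.
move=> K0 c0 m0; pose f y := K * y * expR (- (c * y ^+ 2)).
have mf : measurable_fun [set: R] (fun y => (f y)%:E).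
  apply/measurable_EFinP/measurable_funM; first exact: measurable_funM.
  by apply: measurableT_comp => //; apply: measurableT_comp => //; exact: measurable_funM.
have -> : (\int[lebesgue]_(y in [set` Interval (BSide b m) +oo%O]) (f y)%:E
          = \int[lebesgue]_(y in `[m, +oo[) (f y)%:E)%E.
  by case: b => //; rewrite integral_itv_obnd_cbnd //; exact: measurable_funS mf.
pose F y := - (K / (2 * c)) * expR (- (c * y ^+ 2)).
have dF (y : R) : is_derive y (1 : R) F (f y).
  apply: is_derive_eq; rewrite /GRing.scale/= /f; field; exact: lt0r_neq0.
have cF : continuous F.
  by move=> y; apply: differentiable_continuous; apply/derivable1_diffP.
have Foo : F y @[y --> +oo] --> (0 : R).
  rewrite -(mulr0 (- (K / (2 * c)))); apply: cvgMl_tmp.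
  have cy2 : c * y ^+ 2 @[y --> +oo] --> +oo.
    by apply: gt0_cvgMry => //; exact: cvgr_expr2.
  exact: cvg_comp cy2 (@cvgr_expR R).
rewrite (ge0_continuous_FTC2y _ _ Foo (F := F)).
- by rewrite sub0e /F /= mulNr opprK.
- by move=> y my; rewrite /f !mulr_ge0 ?expR_ge0 //; exact: le_trans my.
- apply: continuous_subspaceT => y; apply: continuousM.
    by apply: continuousM; [exact: cst_continuous | exact: cvg_id].
  apply: differentiable_continuous.
  by have [+ _] := is_derive_expR_Nsqr c y; move/derivable1_diffP.
- by [].
- exact: cvg_at_right_filter (cF m).
- by move=> y _; rewrite derive1E derive_val.
Qed.

End integrals.

Section interval_sections.
Variable R : realType.

Lemma mem_itv (I : interval R) (x : R) : (x \in [set` I]) = (x \in I).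
Proof. by apply/idP/idP => [/set_mem | /mem_set]. Qed.

(* As a right end, [BSide b] is open iff [b]: [y] is excluded and [g] included. *)
Lemma itv_min_section (x y g : R) :
  [&& 0 < x, x < y & x <= g] = (x \in Interval (BRight 0) (BSide (y <= g) (Num.min y g))).
Proof.
rewrite in_itv /=; case: (leP y g) => /= [yg|gy];
  by case: (ltP 0 x); case: (ltP x y); case: (leP x g) => //= *; exfalso; lra.
Qed.

Lemma itv_max_section (x y h : R) :
  (x < y) && (h <= y) = (y \in Interval (BSide (x < h) (Num.max x h)) +oo%O).
Proof.
rewrite in_itv /= andbT; case: (ltP x h) => /= [xh|hx];
  by case: (ltP x y); case: (leP h y) => //= *; exfalso; lra.
Qed.

End interval_sections.

Section joint_density.
Variable R : realType.

Lemma joint_dens_ge0 (lb : R) z : 0 <= joint_dens lb z.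
Proof.
rewrite /joint_dens; case: ifP => // /andP[z1 z12].
have z2 := lt_trans z1 z12.
by rewrite mulr_ge0 ?expR_ge0 // mulr_ge0 ?(ltW z2) // mulr_ge0 ?(ltW z1) ?sqr_ge0.
Qed.

Lemma measurable_joint_dens (lb : R) :
  measurable_fun [set: R * R] (fun z => (joint_dens lb z)%:E).
Proof.
apply/measurable_EFinP; apply: measurable_fun_ifT => //.
- apply: measurable_and; first exact: measurable_fun_ltr.
  exact: measurable_fun_ltr.
- apply: measurable_funM; first by do 2 apply: measurable_funM => //.
  apply: measurableT_comp => //; apply: measurableT_comp => //.
  exact/measurable_funM/measurable_funX.
Qed.

Lemma mem_A_UE (al Pw N M mu x y : R) :
  ((x, y) \in A_UE al Pw N M mu) = (x <= thr al Pw N M mu * y `^ (2 / mu)).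
Proof. by apply/idP/idP => [/set_mem | /mem_set]. Qed.

Lemma measurable_A_UE (al Pw N M mu : R) : measurable (A_UE al Pw N M mu).
Proof.
have mA : measurable_fun [set: R * R]
    (fun z : R * R => z.1 <= thr al Pw N M mu * z.2 `^ (2 / mu)).
  apply: measurable_fun_ler => //; apply: measurable_funM => //.
  exact: measurableT_comp (measurable_powR _) measurable_snd.
by rewrite -[A_UE _ _ _ _ _]setTI; exact: mA.
Qed.

End joint_density.

Section cutoff.
Variables (R : realType) (al Pw N M mu : R).
Hypotheses (al_gt0 : 0 < al) (Pw_gt0 : 0 < Pw) (N_gt0 : 0 < N) (M_gt0 : 0 < M)
  (mu_gt0 : 0 < mu).
Local Notation t := (thr al Pw N M mu).

Definition cutoff (x : R) : R :=
  x `^ (mu / 2) * (Pw / N) `^ ((2 - mu) / (2 * al)) * (1 / M) `^ (1 / (2 * al)).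

Lemma thr_gt0 : 0 < t.
Proof. by rewrite /thr mulr_gt0 // powR_gt0 // divr_gt0. Qed.

Lemma cutoff_gt0 x : 0 < x -> 0 < cutoff x.
Proof. by move=> x0; rewrite /cutoff !mulr_gt0 // powR_gt0 // divr_gt0. Qed.

Lemma ln_cutoff x : 0 < x -> ln (cutoff x) = mu / 2 * (ln x - ln t).
Proof.
move=> x0; rewrite /cutoff /thr !lnM ?posrE ?mulr_gt0 ?powR_gt0 ?divr_gt0 //.
rewrite !ln_powR !ln_div ?posrE // ln1; field.
by rewrite !lt0r_neq0.
Qed.

Lemma le_thr_cutoff x y : 0 < x -> 0 < y -> (x <= t * y `^ (2 / mu)) = (cutoff x <= y).
Proof.
move=> x0 y0; have t0 := thr_gt0; have mu20 : 0 < mu / 2 by rewrite divr_gt0.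
rewrite -[x <= _]ler_ln ?posrE ?mulr_gt0 ?powR_gt0 ?divr_gt0 //.
rewrite -[cutoff x <= y]ler_ln ?posrE ?cutoff_gt0 //.
rewrite lnM ?posrE ?powR_gt0 // ln_powR ln_cutoff // -(ler_pM2l mu20).
rewrite mulrBr lerBlDr mulrDr addrC; congr (_ <= _ + _).
by field; exact: lt0r_neq0.
Qed.

End cutoff.

Section A_UE_integrals.
Variables (R : realType) (lb al Pw N M mu : R).
Hypotheses (lb_gt0 : 0 < lb) (al_gt0 : 0 < al) (Pw_gt0 : 0 < Pw) (N_gt0 : 0 < N)
  (M_gt0 : 0 < M) (mu_gt0 : 0 < mu).
Local Notation lebesgue := (@lebesgue_measure R).
Local Notation A := (A_UE al Pw N M mu).
Local Notation t := (thr al Pw N M mu).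
Local Notation jd := (fun z => (joint_dens lb z)%:E).

Lemma integral_A_UE_section_y (y : R) :
  (\int[lebesgue]_x ((jd \_ A) (x, y)))%E
  = ((fun y => (pA_integrand lb al Pw N M mu y)%:E) \_ `]0%R, +oo[) y.
Proof.
have [y0|y0] := ltP 0 y; last first.
  rewrite patchE mem_itv in_itv /= andbT ltNge y0 /=.
  apply: integral0_eq => x _; rewrite patchE /joint_dens /=.
  by case: ifP => // _; case: ifP => // /andP[x0 xy]; exfalso; lra.
rewrite patchE mem_itv in_itv /= andbT y0.
set g := t * y `^ (2 / mu).
set K := (2 * pi * lb) ^+ 2 * y * expR (- (pi * lb * y ^+ 2)).
transitivity (\int[lebesgue]_(x in [set` Interval (BRight 0%R)
                                        (BSide (y <= g)%R (Num.min y g))]) (K * x)%:E)%E.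
  rewrite [RHS]integral_mkcond; apply: eq_integral => x _.
  rewrite !patchE mem_A_UE mem_itv -itv_min_section /joint_dens /= -/g.
  case: (x <= g); rewrite ?andbT ?andbF //.
  by case: ifP => // _; congr (_%:E); rewrite /K; ring.
have g0 : 0 < g by rewrite mulr_gt0 ?thr_gt0 ?powR_gt0.
rewrite integral_itv_linear ?lt_min ?y0 ?g0 //; congr (_%:E).
by rewrite /pA_integrand -/g /K; field.
Qed.

Definition subdens_X11 (x : R) : R :=
  2 * pi * lb * x * expR (- (pi * lb * (Num.max x (cutoff al Pw N M mu x)) ^+ 2)).

Lemma measurable_subdens_X11 : measurable_fun [set: R] (fun x => (subdens_X11 x)%:E).
Proof.
apply/measurable_EFinP/measurable_funM => //.
apply: measurableT_comp => //; apply: measurableT_comp => //.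
apply/measurable_funM/measurable_funX => //; apply: measurable_maxr => //.
by apply: measurable_funM => //; apply: measurable_funM => //; exact: measurable_powR.
Qed.

Lemma integral_A_UE_section_x (B : set R) (x : R) :
  (\int[lebesgue]_y ((jd \_ (A `&` (B `*` setT))) (x, y)))%E
  = ((fun x => (subdens_X11 x)%:E) \_ (B `&` `]0%R, +oo[)) x.
Proof.
have [Dx|xBN] := pselect ((B `&` `]0%R, +oo[) x); last first.
  rewrite patchE memNset //; apply: integral0_eq => y _; rewrite patchE.
  case: ifP => // /set_mem[_ [Bx _]]; rewrite /joint_dens /=.
  by case: ifP => // /andP[x0 _]; exfalso; apply: xBN; rewrite /= in_itv /= andbT.
rewrite patchE mem_set //; case: Dx => xB; rewrite /= in_itv /= andbT => x0.
set h := cutoff al Pw N M mu x; set K := (2 * pi * lb) ^+ 2 * x.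
have pilb0 : 0 < pi * lb by rewrite mulr_gt0 ?pi_gt0.
transitivity (\int[lebesgue]_(y in [set` Interval (BSide (x < h)%R (Num.max x h)) +oo%O])
                (K * y * expR (- (pi * lb * y ^+ 2)))%:E)%E.
  rewrite [RHS]integral_mkcond; apply: eq_integral => y _.
  rewrite !patchE in_setI in_setX in_setT (mem_set xB) andbT mem_A_UE mem_itv.
  rewrite -itv_max_section /joint_dens /= x0 /=.
  case: (ltP x y) => xy /=; last by case: ifP.
  rewrite le_thr_cutoff // ?(lt_trans x0 xy) //.
  by case: (leP h y) => // _; congr (_%:E); rewrite /K; ring.
have K0 : 0 <= K by rewrite mulr_ge0 ?sqr_ge0 ?ltW.
have m0 : 0 <= Num.max x h by rewrite le_max ltW.
rewrite (integral_rayleigh_tail _ K0 pilb0 m0) /=; congr (_%:E).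
(* [field] would unfold [pi]; make it an atom first *)
rewrite /subdens_X11 -/h /K; have := @pi_gt0 R; move: (pi : R) => p p0.
by field; rewrite !lt0r_neq0.
Qed.

Lemma integral_joint_dens_A_UE :
  (\int[lebesgue \x lebesgue]_(z in A) (joint_dens lb z)%:E)%E
  = pA_formula lb al Pw N M mu.
Proof.
rewrite integral_mkcond fubini_tonelli2.
- rewrite /pA_formula [RHS]integral_mkcond; apply: eq_integral => y _.
  exact: integral_A_UE_section_y.
- apply/(measurable_restrictT _ (measurable_A_UE _ _ _ _ _)).
  exact: measurable_funTS (measurable_joint_dens lb).
- by move=> z; rewrite patchE; case: ifP => // _; rewrite lee_fin joint_dens_ge0.
Qed.

Lemma integral_joint_dens_A_UE_X11 (B : set R) : measurable B ->
  (\int[lebesgue \x lebesgue]_(z in A `&` (B `*` setT)) (joint_dens lb z)%:E)%E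
  = (\int[lebesgue]_(x in B `&` `]0%R, +oo[) (subdens_X11 x)%:E)%E.
Proof.
move=> mB; have mAB : measurable (A `&` (B `*` setT)).
  by apply: measurableI; [exact: measurable_A_UE | exact: measurableX].
rewrite integral_mkcond fubini_tonelli1.
- rewrite [RHS]integral_mkcond; apply: eq_integral => x _.
  exact: integral_A_UE_section_x.
- apply/(measurable_restrictT _ mAB).
  exact: measurable_funTS (measurable_joint_dens lb).
- by move=> z; rewrite patchE; case: ifP => // _; rewrite lee_fin joint_dens_ge0.
Qed.

End A_UE_integrals.

Theorem lemma2 (R : realType) (d : measure_display) (T : measurableType d)
  (P : probability T R) (X11 X21 : T -> R)
  (lb al Pw N M mu : R)
  (hlb : 0 < lb) (hal : 2 < al) (hPw : 0 < Pw) (hN : 0 < N) (hM : 1 <= M)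
  (hmu1 : 1 <= mu) (hmu2 : mu <= 2)
  (mX11 : measurable_fun setT X11) (mX21 : measurable_fun setT X21)
  (hjoint : forall A : set (R * R), measurable A ->
     P ((fun t => (X11 t, X21 t)) @^-1` A) =
     (\int[(@lebesgue_measure R) \x (@lebesgue_measure R)]_(z in A)
        (joint_dens lb z)%:E)%E) :
  let AUE := (fun t => (X11 t, X21 t)) @^-1` A_UE al Pw N M mu in
  P AUE = pA_formula lb al Pw N M mu /\
  forall B : set R, measurable B ->
    (condprob P (X11 @^-1` B) AUE)%:E =
    (\int[lebesgue_measure]_(x in B `&` `]0%R, +oo[) (f_cond lb al Pw N M mu x)%:E)%E.
Proof.
move=> AUE; have al0 : 0 < al by apply: lt_trans hal.
have M0 : 0 < M by apply: lt_le_trans hM.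
have mu0 : 0 < mu by apply: lt_le_trans hmu1.
have PA : P AUE = pA_formula lb al Pw N M mu.
  by rewrite /AUE hjoint; [exact: integral_joint_dens_A_UE | exact: measurable_A_UE].
split => // B mB; set p := fine (pA_formula lb al Pw N M mu).
have mAB : measurable (A_UE al Pw N M mu `&` (B `*` setT)).
  by apply: measurableI; [exact: measurable_A_UE | exact: measurableX].
have preimage_B_AUE : X11 @^-1` B `&` AUE
    = (fun t => (X11 t, X21 t)) @^-1` (A_UE al Pw N M mu `&` (B `*` setT)).
  by apply/seteqP; split => t /= [] => [Bx At | At [Bx _]].
have PE : P (X11 @^-1` B `&` AUE)
    = (\int[lebesgue_measure]_(x in B `&` `]0%R, +oo[)
         (subdens_X11 lb al Pw N M mu x)%:E)%E.
  by rewrite preimage_B_AUE hjoint ?integral_joint_dens_A_UE_X11.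
have p0 : 0 <= p by rewrite /p -PA fine_ge0.
under eq_integral do rewrite /f_cond -/p EFinM.
rewrite ge0_integralZr //.
- rewrite -PE /condprob PA -/p EFinM fineK // fin_num_measure //.
  by rewrite preimage_B_AUE -[X in measurable X]setTI; apply: measurable_fun_pair.
- exact: measurableI.
- exact: measurable_funTS (measurable_subdens_X11 _ _ _ _ _ _).
- move=> x [_]; rewrite /= in_itv /= andbT => x0.
  by rewrite lee_fin mulr_ge0 ?expR_ge0 // !mulr_ge0 ?pi_ge0 ?(ltW hlb) ?(ltW x0).
- by rewrite lee_fin invr_ge0.
Qed.
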